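(* Let $p>0$, let $f$ be a $p$-knowable Boolean function, and let $q>0$ with $pq>1$. Then for every integer $n\ge1$, $$\sum_{k>n}I_k(f)^q\le\mathbb E[(\max W(f))^p]^q\,\frac{n^{1-pq}}{pq-1}.$$ In particular, if $f$ is $p$-knowable for some $p>\tfrac12$, then $H(f)=\sum_k I_k(f)^2<\infty$.
   Context: Let $\Omega=\{-1,1\}$ and $\Omega^\infty=\{-1,1\}^{\mathbb N}$ with the uniform product probability measure; $\omega$ denotes a uniformly random element. A Boolean function is a measurable map $f:\Omega^\infty\to\Omega$. $\omega^{(k)}$ is $\omega$ with bit $k$ flipped; $I_k(f)=\mathbb P(f(\omega^{(k)})\ne f(\omega))$, $H(f)=\sum_kI_k(f)^2$. A set $W\subseteq\mathbb N$ is a witness set for $f$ at $\omega$ if there is an event $A$ with $\mathbb P(A)=1$ such that for all $\tilde\omega\in A$: if $\tilde\omega_i=\omega_i$ for all $i\in W$ then $f(\tilde\omega)=f(\omega)$. $f$ is finitary if almost surely a finite witness set exists; then $W(f)(\omega)$ denotes the least finite witness set in the order: smaller maximum first, then smaller cardinality, then lexicographic. $f$ is $p$-knowable if it is finitary and $\mathbb E[(\max W(f))^p]<\infty$. *)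

From HB Require Import structures.
From mathcomp Require Import all_boot all_order all_algebra.
From mathcomp Require Import all_classical all_reals all_analysis.
Set Implicit Arguments. Unset Strict Implicit. Unset Printing Implicit Defensive.
Import Order.TTheory GRing.Theory Num.Theory.
Local Open Scope classical_set_scope.
Local Open Scope ring_scope.

(* Omega = {-1,1} is encoded by bool (true = +1, false = -1);
   Omega^infty = {-1,1}^N is nat -> bool. *)
Definition cube := nat -> bool.

Definition coord_events : set (set cube) :=
  fun A => exists (i : nat) (b : bool), A = [set w : cube | w i = b].

Definition Cube := g_sigma_algebraType coord_events.

(* P is the uniform product probability measure: every cylinder fixing
   the first n coordinates has probability 2^-n.  These values determine
   the measure uniquely on the product sigma-algebra (pi-lambda). *)
Definition uniform_product {R : realType} (P : probability Cube R) : Prop :=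
  forall (n : nat) (b : nat -> bool),
    P [set w : Cube | forall i, (i < n)%N -> w i = b i] = ((2%:R ^- n : R))%:E.

Definition flip (k : nat) (w : cube) : cube :=
  fun i => if i == k then ~~ w i else w i.

Definition influence {R : realType} (P : probability Cube R) (f : Cube -> bool)
  (k : nat) : R :=
  fine (P [set w : Cube | f (flip k w) != f w]).

Definition Hf {R : realType} (P : probability Cube R) (f : Cube -> bool) : \bar R :=
  \sum_(k <oo) ((influence P f k) ^+ 2)%:E.

Definition witness {R : realType} (P : probability Cube R) (f : Cube -> bool)
  (w : Cube) (W : set nat) : Prop :=
  exists A : set Cube, measurable A /\ P A = 1%E /\
    forall wt : Cube, A wt -> (forall i, W i -> wt i = w i) -> f wt = f w.

Definition finitary {R : realType} (P : probability Cube R) (f : Cube -> bool) : Prop :=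
  {ae P, forall w : Cube, exists W : set nat, finite_set W /\ witness P f w W}.

(* Finite subsets of nat represented by their strictly increasing enumeration. *)
Fixpoint lexle (s t : seq nat) : bool :=
  match s, t with
  | [::], _ => true
  | _ :: _, [::] => false
  | x :: s', y :: t' => (x < y)%N || ((x == y) && lexle s' t')
  end.

(* max of a finite set (0 for the empty set) *)
Definition smax (s : seq nat) : nat := \max_(i <- s) i.

Definition wle (s t : seq nat) : bool :=
  (smax s < smax t)%N ||
  ((smax s == smax t) &&
   ((size s < size t)%N || ((size s == size t) && lexle s t))).

Definition least_witness {R : realType} (P : probability Cube R) (f : Cube -> bool)
  (w : Cube) (s : seq nat) : Prop :=
  sorted ltn s /\ witness P f w [set i | i \in s] /\
  forall t : seq nat, sorted ltn t -> witness P f w [set i | i \in t] -> wle s t.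

(* W(f)(w): the least finite witness set (empty seq if none exists,
   which happens only on a null set when f is finitary) *)
Definition Wf {R : realType} (P : probability Cube R) (f : Cube -> bool)
  (w : Cube) : seq nat :=
  xget [::] (least_witness P f w).

Definition maxW {R : realType} (P : probability Cube R) (f : Cube -> bool)
  (w : Cube) : nat := smax (Wf P f w).

Definition knowable {R : realType} (P : probability Cube R) (p : R)
  (f : Cube -> bool) : Prop :=
  finitary P f /\
  (\int[P]_w (((maxW P f w)%:R : R) `^ p)%:E < +oo)%E.

Definition EmaxWp {R : realType} (P : probability Cube R) (p : R)
  (f : Cube -> bool) : R :=
  fine (\int[P]_w (((maxW P f w)%:R : R) `^ p)%:E).

From HB Require Import structures.
From mathcomp Require Import all_boot all_order all_algebra.
From mathcomp Require Import all_classical all_reals all_analysis.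
From mathcomp Require Import ring lra.
Set Implicit Arguments. Unset Strict Implicit. Unset Printing Implicit Defensive.
Import Order.TTheory GRing.Theory Num.Theory.

(* If bit k is pivotal at w, the least witness W(f)(w) must contain an index
   >= k: otherwise f is almost surely constant on the cylinder fixing the first
   k bits of w.  Flipping bit k maps that cylinder to itself and preserves P
   (P is determined by its values on cylinders), so the set where k is pivotal
   although f is a.s. constant on the level-k cylinder is null.  Hence
   I_k(f) <= P(max W(f) >= k) <= E[(max W(f))^p] k^-p by Markov's inequality,
   and the tail bound follows by comparing sum_(k > n) k^-pq with an integral;
   q = 2 gives H(f) < oo. *)

Local Open Scope classical_set_scope.
Local Open Scope ring_scope.

Definition set_bit (k : nat) (b : bool) (w : cube) : cube :=
  fun i => if i == k then b else w i.

Definition prefix_determined (k : nat) (Q : set Cube) :=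
  forall w w' : Cube, (forall i, (i < k)%N -> w i = w' i) -> (Q w <-> Q w').

Definition cylinder (m : nat) (b : cube) : set Cube :=
  [set w : Cube | forall i, (i < m)%N -> w i = b i].

Lemma measurable_coord i b : measurable ([set w | w i = b] : set Cube).
Proof. by apply: sub_sigma_algebra; exists i, b. Qed.

Lemma set_bit_id k (w : cube) : set_bit k (w k) w = w.
Proof. by apply/funext => i; rewrite /set_bit; case: eqP => // ->. Qed.

Lemma prefix_determined_set_bit k b Q :
  prefix_determined k.+1 Q -> prefix_determined k [set w | Q (set_bit k b w)].
Proof.
move=> dQ w w' ww'; apply: dQ => i ik; rewrite /set_bit.
by case: eqP => // /eqP ne; apply: ww'; rewrite ltn_neqAle ne -ltnS.
Qed.

Lemma measurable_prefix_determined k Q : prefix_determined k Q -> measurable Q.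
Proof.
elim: k Q => [|k IH] Q dQ.
  have [[w0 Qw0]|nQ] := pselect (exists w, Q w).
    suff -> : Q = setT by exact: measurableT.
    by apply/seteqP; split => // w _; apply/(dQ w0 w).
  suff -> : Q = set0 by exact: measurable0.
  by apply/seteqP; split => // w Qw; apply: nQ; exists w.
have -> : Q = ([set w | w k = true] `&` [set w | Q (set_bit k true w)]) `|`
              ([set w | w k = false] `&` [set w | Q (set_bit k false w)]).
  apply/seteqP; split => w /=.
    by case wk: (w k) => Qw; [left|right]; rewrite -wk set_bit_id.
  by case=> -[<-]; rewrite set_bit_id.
by apply: measurableU; apply: measurableI;
  [exact: measurable_coord|apply: IH; exact: prefix_determined_set_bit
  |exact: measurable_coord|apply: IH; exact: prefix_determined_set_bit].
Qed.

Lemma cylinder_prefix_determined m b : prefix_determined m (cylinder m b).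
Proof. by move=> w w' ww'; split => H i im; rewrite -H // ww'. Qed.

Lemma measurable_cylinder m b : measurable (cylinder m b).
Proof. exact: measurable_prefix_determined (@cylinder_prefix_determined m b). Qed.

Lemma cylinder0 b : cylinder 0 b = setT.
Proof. by apply/seteqP; split. Qed.

Lemma cylinderS m b :
  cylinder m b = cylinder m.+1 (set_bit m true b) `|` cylinder m.+1 (set_bit m false b).
Proof.
apply/seteqP; split => w /=.
  move=> wc; suff wc' : cylinder m.+1 (set_bit m (w m) b) w.
    by case: (w m) wc'; [left|right].
  move=> i; rewrite ltnS leq_eqVlt => /orP [/eqP ->|im].
    by rewrite /set_bit eqxx.
  by rewrite /set_bit (ltn_eqF im) wc.
by case=> wc i im; rewrite wc ?ltnS ?(ltnW im) // /set_bit (ltn_eqF im).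
Qed.

Lemma cylinderS_disjoint m b :
  cylinder m.+1 (set_bit m true b) `&` cylinder m.+1 (set_bit m false b) = set0.
Proof.
apply/seteqP; split => // w [h1 h2].
by move: (h1 m (ltnSn m)) (h2 m (ltnSn m)); rewrite /set_bit eqxx => ->.
Qed.

Lemma flip_cylinder_mem k (w v : Cube) : cylinder k w v -> cylinder k w (flip k v).
Proof. by move=> h i ik; rewrite /flip (ltn_eqF ik); exact: h. Qed.

Lemma flip_preimage_cylinder k m b :
  (flip k : Cube -> Cube) @^-1` cylinder m b = cylinder m (flip k b).
Proof.
apply/seteqP; split => w /= h i im; have := h i im; rewrite /flip;
  by case: (i == k); case: (w i); case: (b i).
Qed.

Lemma measurable_flip k : measurable_fun setT (flip k : Cube -> Cube).
Proof.
apply: (measurability (D := setT) (f := flip k : Cube -> Cube) coord_events) => //.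
move=> _ [_ [i [b ->]] <-].
have -> : setT `&` (flip k : Cube -> Cube) @^-1` [set w | w i = b] =
   [set w : Cube | w i = if i == k then ~~ b else b].
  apply/seteqP; split => w /=; rewrite /flip;
    by case: (i == k); case: (w i); case: b => //= -[].
exact: measurable_coord.
Qed.

Section cylinder_measure_unique.
Variables (R : realType) (mu1 mu2 : {measure set Cube -> \bar R}).
Hypothesis mu12 : forall m b, mu1 (cylinder m b) = mu2 (cylinder m b).

Lemma eq_measure_prefix_determined_cylinder n m A b :
  prefix_determined (n + m) A -> mu1 (A `&` cylinder m b) = mu2 (A `&` cylinder m b).
Proof.
elim: n m b => [|n IH] m b dA.
  have [Ab|nAb] := pselect (A b).
    suff -> : A `&` cylinder m b = cylinder m b by exact: mu12.
    by apply/seteqP; split => [w []//|w wc]; split => //; apply/(dA w b).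
  suff -> : A `&` cylinder m b = set0 by rewrite !measure0.
  by apply/seteqP; split => // w [Aw wc]; apply: nAb; apply/(dA w b).
have mA : measurable A by exact: measurable_prefix_determined dA.
have mAc c : measurable (A `&` cylinder m.+1 c).
  by apply: measurableI => //; exact: measurable_cylinder.
have dA' : prefix_determined (n + m.+1) A by rewrite addnS.
rewrite cylinderS setIUr !measureU //; first by congr (_ + _)%E; apply: IH.
all: by rewrite setIACA setIid cylinderS_disjoint setI0.
Qed.

Lemma eq_measure_prefix_determined n A : prefix_determined n A -> mu1 A = mu2 A.
Proof.
move=> dA; rewrite -(setIT A) -(cylinder0 (fun _ => true)).
by apply: (@eq_measure_prefix_determined_cylinder n); rewrite addn0.
Qed.

Hypothesis mu1_fin : (mu1 setT < +oo)%E.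

Lemma eq_measure_cylinder A : measurable A -> mu1 A = mu2 A.
Proof.
apply: (measure_unique [set A | exists n, prefix_determined n A] (fun _ => setT)).
- apply/seteqP; split; apply: smallest_sub; try exact: smallest_sigma_algebra.
    move=> _ [i [b ->]]; apply: sub_sigma_algebra; exists i.+1 => w w' ww'.
    by rewrite /= ww'.
  by move=> A0 [n dA]; exact: measurable_prefix_determined dA.
- move=> A1 A2 [n1 d1] [n2 d2]; exists (maxn n1 n2) => w w' ww'.
  have agree n : (n <= maxn n1 n2)%N -> forall i, (i < n)%N -> w i = w' i.
    by move=> nm i ii; apply: ww'; exact: leq_trans nm.
  by rewrite /= (d1 w w' (agree _ (leq_maxl _ _))) (d2 w w' (agree _ (leq_maxr _ _))).
- by move=> _; exists 0%N.
- by rewrite bigcup_const.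
- by move=> A0 [n dA]; exact: eq_measure_prefix_determined dA.
- by move=> _.
Qed.

End cylinder_measure_unique.

Lemma uniform_product_flip (R : realType) (P : probability Cube R) k (A : set Cube) :
  uniform_product P -> measurable A -> P ((flip k : Cube -> Cube) @^-1` A) = P A.
Proof.
move=> uP mA; rewrite -[LHS]/(pushforward P (flip k : Cube -> Cube) A).
symmetry; apply: eq_measure_cylinder => //; first exact: measurable_flip.
- move=> mflip m b; rewrite /= /pushforward flip_preimage_cylinder.
  by have := uP m b; have := uP m (flip k b); rewrite /cylinder => -> ->.
- by apply: (le_lt_trans (probability_le1 _ measurableT)); exact: ltry.
Qed.

Lemma cylinder_slices_measure0 (R : realType) (mu : {measure set Cube -> \bar R})
    n (E : set Cube) :
  measurable E -> (forall w, mu (cylinder n w `&` E) = 0) -> mu E = 0.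
Proof.
elim: n E => [|n IH] E mE E0; first by rewrite -(setTI E) -(cylinder0 (fun=> true)).
apply: IH => // w; rewrite cylinderS setIUl.
by apply: null_set_setU; rewrite ?E0 //; apply: measurableI => //;
  exact: measurable_cylinder.
Qed.

Lemma cylinder_eq k (w v : Cube) : cylinder k w v -> cylinder k v = cylinder k w.
Proof. by move=> h; apply/seteqP; split => u /= hu i ik; rewrite hu // h. Qed.

Lemma measurable_bool_neq d (T : measurableType d) (g h : T -> bool) :
  measurable_fun setT g -> measurable_fun setT h -> measurable [set x | g x != h x].
Proof.
move=> mg mh.
have mpre (u : T -> bool) b : measurable_fun setT u -> measurable [set x | u x = b].
  by move=> mu; rewrite -[X in measurable X]setTI; exact: (mu measurableT [set b]).
have -> : [set x | g x != h x] = ([set x | g x = true] `&` [set x | h x = false]) `|`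
                                 ([set x | g x = false] `&` [set x | h x = true]).
  apply/seteqP; split => x /=; case: (g x); case: (h x) => //=;
    by [left|right|case=> -[]].
by apply: measurableU; apply: measurableI; exact: mpre.
Qed.

Definition pivotal (f : Cube -> bool) (k : nat) := [set w : Cube | f (flip k w) != f w].

Lemma measurable_pivotal f k : measurable_fun setT f -> measurable (pivotal f k).
Proof.
by move=> mf; apply: measurable_bool_neq => //; exact: measurableT_comp (measurable_flip k).
Qed.

Lemma influenceE (R : realType) (P : probability Cube R) f k :
  measurable_fun setT f -> (influence P f k)%:E = P (pivotal f k).
Proof.
move=> mf; rewrite /influence fineK // ge0_fin_numE ?measure_ge0 //.
apply: (le_lt_trans (probability_le1 _ (measurable_pivotal k mf))); exact: ltry.
Qed.

Lemma influence_ge0 (R : realType) (P : probability Cube R) f k :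
  0 <= influence P f k.
Proof. exact/fine_ge0/measure_ge0. Qed.

Section pivotal_null.
Variables (R : realType) (P : probability Cube R) (f : Cube -> bool).
Hypotheses (uP : uniform_product P) (mf : measurable_fun setT f).

Definition cylinder_ae_const (k : nat) : set Cube :=
  [set w | exists c, P (cylinder k w `&` [set v | f v != c]) = 0].

Lemma measurable_cylinder_ae_const k : measurable (cylinder_ae_const k).
Proof.
apply: (measurable_prefix_determined (k := k)) => w w' ww'.
by rewrite /cylinder_ae_const /= (@cylinder_eq k w w') // => i ik; rewrite ww'.
Qed.

Lemma pivotal_cylinder_ae_const0 k : P (pivotal f k `&` cylinder_ae_const k) = 0.
Proof.
have mpiv := measurable_pivotal k mf.
apply: (cylinder_slices_measure0 (n := k)) => [|w0].
  by apply: measurableI => //; exact: measurable_cylinder_ae_const.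
have [[c Ec0]|nconst] := pselect (cylinder_ae_const k w0); last first.
  suff -> : cylinder k w0 `&` (pivotal f k `&` cylinder_ae_const k) = set0.
    exact: measure0.
  apply/seteqP; split => // v [vc [_ cv]]; apply: nconst.
  by rewrite /cylinder_ae_const /= -(cylinder_eq vc).
set E := cylinder k w0 `&` [set v | f v != c].
have mE : measurable E.
  apply: measurableI; first exact: measurable_cylinder.
  by apply: measurable_bool_neq => //; exact: measurable_cst.
have mflipE : measurable ((flip k : Cube -> Cube) @^-1` E).
  by rewrite -[X in measurable X]setTI; exact: measurable_flip.
(* On the slice, [f v != f (flip k v)] forces [v] or [flip k v] into [E]. *)
apply: (subset_measure0 _ (measurableU _ _ mE mflipE)).
- apply: measurableI; first exact: measurable_cylinder.
  by apply: measurableI => //; exact: measurable_cylinder_ae_const.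
- move=> v [vc [vpiv _]]; have vc' := flip_cylinder_mem vc.
  by case: (eqVneq (f v) c) => e; [right|left]; split => //; rewrite /= -?e // eq_sym.
- apply: (@null_set_setU _ _ _ P _ _ mE mflipE); first exact: Ec0.
  exact: eq_trans (uniform_product_flip k uP mE) Ec0.
Qed.

End pivotal_null.

Lemma ex_minn_prop (Q : nat -> Prop) :
  (exists n, Q n) -> exists m, Q m /\ forall n, Q n -> (m <= n)%N.
Proof.
move=> [n Qn]; have exQ : exists n, `[< Q n >] by exists n; exact/asboolP.
case: (ex_minnP exQ) => m /asboolP Qm mmin.
by exists m; split => // n' Qn'; apply: mmin; exact/asboolP.
Qed.

Lemma lexle_min_exists z (Q : seq nat -> Prop) :
  (exists s, Q s /\ size s = z) ->
  exists s, Q s /\ size s = z /\ forall t, Q t -> size t = z -> lexle s t.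
Proof.
elim: z Q => [|z IH] Q; first by case=> s [Qs /size0nil s0]; subst s; exists [::].
move=> [[|x s] [Qs //] [sz]].
have [m [[tl [Qm szm]] mmin]] : exists m, (exists tl, Q (m :: tl) /\ size tl = z) /\
    forall n, (exists tl, Q (n :: tl) /\ size tl = z) -> (m <= n)%N.
  by apply: ex_minn_prop; exists x, s.
have [s' [Qs' [sz' s'min]]] := IH (fun tl => Q (m :: tl)) (ex_intro _ tl (conj Qm szm)).
exists (m :: s'); split => //; split; first by rewrite /= sz'.
move=> [|y t] // Qt [szt] /=.
have := mmin y (ex_intro _ t (conj Qt szt)).
rewrite leq_eqVlt => /orP [/eqP my|->] //; subst y.
by rewrite ltnn eqxx s'min.
Qed.

Lemma wle_min_exists (Q : seq nat -> Prop) :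
  (exists t, sorted ltn t /\ Q t) ->
  exists s, sorted ltn s /\ Q s /\ forall t, sorted ltn t -> Q t -> wle s t.
Proof.
move=> [t0 Qt0].
have [m [[t1 [Qt1 e1]] mmin]] :=
  @ex_minn_prop (fun m => exists t, (sorted ltn t /\ Q t) /\ smax t = m)
    (ex_intro _ _ (ex_intro _ t0 (conj Qt0 erefl))).
have [z [[t2 [[Qt2 e2] sz2]] zmin]] :=
  @ex_minn_prop (fun z => exists t, ((sorted ltn t /\ Q t) /\ smax t = m) /\ size t = z)
    (ex_intro _ _ (ex_intro _ t1 (conj (conj Qt1 e1) erefl))).
have [s [[[ss Qs] es] [szs smin]]] :=
  @lexle_min_exists _ (fun t => (sorted ltn t /\ Q t) /\ smax t = m)
    (ex_intro _ t2 (conj (conj Qt2 e2) sz2)).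
exists s; split => //; split => // t st Qt.
have := mmin (smax t) (ex_intro _ t (conj (conj st Qt) erefl)).
rewrite /wle es leq_eqVlt => /orP [/eqP mt|->] //.
have := zmin (size t) (ex_intro _ t (conj (conj (conj st Qt) (esym mt)) erefl)).
rewrite mt eqxx /= szs leq_eqVlt => /orP [/eqP zt|->]; rewrite ?orbT //.
by rewrite -zt ltnn eqxx smin // ltnn orbT.
Qed.

Lemma finite_set_sorted_enum (W : set nat) :
  finite_set W -> exists t, sorted ltn t /\ [set i | i \in t] = W.
Proof.
move/finite_seqP => [s ->]; exists (sort leq (undup s)); split.
  by rewrite ltn_sorted_uniq_leq sort_uniq undup_uniq (sort_sorted leq_total).
by apply/seteqP; split => i /=; rewrite mem_sort mem_undup.
Qed.

(* [g] need not be measurable: the bound goes through the supremum over simple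
   functions that defines the integral. *)
Lemma ge0_integral_ge_measure d (T : measurableType d) (R : realType)
    (mu : {measure set T -> \bar R}) (A : set T) (c : R) (g : T -> \bar R) :
  measurable A -> 0 <= c -> (forall x, 0 <= g x)%E -> (forall x, A x -> c%:E <= g x)%E ->
  (c%:E * mu A <= \int[mu]_x g x)%E.
Proof.
move=> mA c0 g0 cg; rewrite ge0_integralTE //; apply: ereal_sup_ubound.
exists (scale_nnsfun (indic_nnsfun R mA) c0); last by rewrite sintegralrM sintegral_indic.
move=> x /=; rewrite /measurable_realfun.mindic indicE.
have [xA|_] := boolP (x \in A); last by rewrite mulr0.
by rewrite mulr1; apply: cg; rewrite -inE.
Qed.

Section influence_bound.
Variables (R : realType) (P : probability Cube R) (f : Cube -> bool).
Hypotheses (uP : uniform_product P) (mf : measurable_fun setT f).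

Lemma least_witness_Wf w :
  (exists W, finite_set W /\ witness P f w W) -> least_witness P f w (Wf P f w).
Proof.
move=> [W [finW wW]]; apply: xgetPex.
have [t [st tW]] := finite_set_sorted_enum finW.
have [s [ss [Ws smin]]] := @wle_min_exists (fun t => witness P f w [set i | i \in t])
  (ex_intro _ t (conj st (eq_ind_r (witness P f w) wW tW))).
by exists s.
Qed.

Lemma maxW_lt_cylinder_ae_const k w :
  (exists W, finite_set W /\ witness P f w W) -> (maxW P f w < k)%N ->
  cylinder_ae_const P f k w.
Proof.
move=> exW lt; have [_ [[A [mA [PA fA]]] _]] := least_witness_Wf exW.
exists (f w); apply: (subset_measure0 _ (measurableC mA)).
- apply: measurableI; first exact: measurable_cylinder.
  by apply: measurable_bool_neq => //; exact: measurable_cst.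
- move=> v [vc /eqP fv] Av; apply: fv; apply: fA => // i iW; apply: vc.
  by apply: leq_ltn_trans lt; exact: (@leq_bigmax_seq _ _ predT id).
- by apply: eq_trans (probability_setC P mA) _; rewrite PA subee.
Qed.

Lemma influence_markov (p : R) k : 0 <= p -> finitary P f ->
  ((k%:R `^ p)%:E * (influence P f k)%:E <= \int[P]_w ((maxW P f w)%:R `^ p)%:E)%E.
Proof.
move=> p0 [N [mN PN0 noW]].
set X := (pivotal f k `&` cylinder_ae_const P f k) `|` N.
have mpiv := measurable_pivotal k mf.
have mX : measurable X.
  apply: measurableU => //; apply: measurableI => //.
  exact: measurable_cylinder_ae_const.
have PX0 : P X = 0.
  by apply: (@null_set_setU _ _ _ P _ _ _ mN) => //;
    [apply: measurableI => //; exact: measurable_cylinder_ae_const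
    |exact: pivotal_cylinder_ae_const0].
have mB : measurable (pivotal f k `\` X) by exact: measurableD.
have PB : ((influence P f k)%:E <= P (pivotal f k `\` X))%E.
  rewrite influenceE // -(@measureU0 _ _ _ P _ _ mB mX PX0).
  apply: le_measure; rewrite ?inE //; first exact: measurableU.
  by move=> w pw; have [wX|wX] := pselect (X w); [right|left].
apply: le_trans (lee_wpmul2l _ PB) _; first by rewrite lee_fin powR_ge0.
apply: ge0_integral_ge_measure => // w [wpiv wX]; rewrite lee_fin ge0_ler_powR ?nnegrE ?ler0n // ler_nat leqNgt.
apply/negP => lt; have exW : exists W, finite_set W /\ witness P f w W.
  by apply: contrapT => nW; apply: wX; right; exact: noW.
by apply: wX; left; split => //; exact: maxW_lt_cylinder_ae_const.
Qed.

Lemma influence_le_powRN (p : R) k : 0 < p -> knowable P p f -> (0 < k)%N ->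
  influence P f k <= EmaxWp P p f * k%:R `^ (- p).
Proof.
move=> p_gt0 [fin intfin] k_gt0.
have := influence_markov k (ltW p_gt0) fin.
rewrite -[X in (_ <= X)%E]fineK; last first.
  by rewrite ge0_fin_numE // integral_ge0 // => w _; rewrite lee_fin powR_ge0.
rewrite -EFinM lee_fin powRN ler_pdivlMr ?powR_gt0 ?ltr0n //.
by rewrite mulrC.
Qed.

End influence_bound.

Section power_tails.
Variable R : realType.

(* The sum/integral comparison for [k `^ (- s)], via [ln (1 - 1/x) <= - 1/x]. *)
Lemma powRN_le_powR_diff (s x : R) : 1 < s -> 1 < x ->
  (s - 1) * x `^ (- s) <= (x - 1) `^ (1 - s) - x `^ (1 - s).
Proof.
move=> s1 x1; have x0 : 0 < x by lra.
set y := 1 - x^-1.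
have y0 : 0 < y by rewrite /y subr_gt0 invf_lt1.
have xy : x - 1 = x * y by rewrite /y mulrBr mulr1 divff ?gt_eqF.
have lny : ln y <= - x^-1 by apply: le_ln1Dx; rewrite ltrN2 invf_lt1.
have y_pow : 1 + (s - 1) / x <= y `^ (1 - s).
  rewrite /powR gt_eqF //; apply: le_trans (expR_ge1Dx _); rewrite lerD2l.
  have : (s - 1) * x^-1 <= (s - 1) * - ln y by apply: ler_wpM2l; lra.
  lra.
have xs : x `^ (1 - s) = x * x `^ (- s).
  by rewrite powRD ?(gt_eqF x0) ?implybT // powRr1 // ltW.
rewrite xy powRM ?(ltW x0) ?(ltW y0) // xs.
have xs0 : 0 <= x * x `^ (- s) by rewrite mulr_ge0 ?powR_ge0 // ltW.
have := ler_wpM2l xs0 y_pow.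
have -> : x * x `^ (- s) * (1 + (s - 1) / x) = x * x `^ (- s) + (s - 1) * x `^ (- s).
  by field; rewrite gt_eqF.
lra.
Qed.

Lemma sum_powRN_le (s : R) (n j : nat) : 1 < s -> (0 < n)%N ->
  \sum_(n.+1 <= k < n.+1 + j) k%:R `^ (- s) <=
  (n%:R `^ (1 - s) - (n + j)%:R `^ (1 - s)) / (s - 1).
Proof.
move=> s1 n_gt0; have s0 : 0 < s - 1 by lra.
elim: j => [|j IH]; first by rewrite !addn0 big_geq // subrr mul0r.
rewrite addnS big_nat_recr /= ?leq_addr // addnS -natr1.
have nj1 : 1 < (n + j).+1%:R :> R by rewrite ltr1n ltnS (leq_trans n_gt0) ?leq_addr.
have := powRN_le_powR_diff s1 nj1; rewrite -natr1 addrK => step.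
set a := n%:R `^ (1 - s) in IH *; set b := (n + j)%:R `^ (1 - s) in IH step *.
set c := ((n + j)%:R + 1) `^ (1 - s) in step *.
set d := ((n + j)%:R + 1) `^ (- s) in step *.
have step' : d <= (b - c) / (s - 1) by rewrite ler_pdivlMr //; lra.
rewrite (_ : (a - c) / (s - 1) = (a - b) / (s - 1) + (b - c) / (s - 1)).
  exact: lerD.
by rewrite -mulrDl addrA subrK.
Qed.

Lemma nneseries_tail_le_powR (a : nat -> R) (C s : R) n :
  0 <= C -> 1 < s -> (0 < n)%N ->
  (forall k, (n < k)%N -> 0 <= a k <= C * k%:R `^ (- s)) ->
  (\sum_(n.+1 <= k <oo) (a k)%:E <= (C * n%:R `^ (1 - s) / (s - 1))%:E)%E.
Proof.
move=> C0 s1 n_gt0 a_bound; have s0 : 0 < s - 1 by lra.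
apply: lime_le.
  by apply: is_cvg_nneseries => k kn _; rewrite lee_fin; case/andP: (a_bound k kn).
apply: nearW => N /=; rewrite sumEFin lee_fin.
have [NleSn|SnltN] := leqP N n.+1.
  by rewrite big_geq // -mulrA mulr_ge0 // divr_ge0 ?powR_ge0 // ltW.
apply: (@le_trans _ _ (\sum_(n.+1 <= k < N) C * k%:R `^ (- s))).
  by apply: ler_sum_nat => k /andP [nk _]; case/andP: (a_bound k nk).
rewrite -(subnKC (ltnW SnltN)) -mulr_sumr -mulrA; apply: ler_wpM2l => //.
apply: (le_trans (sum_powRN_le _ s1 n_gt0)).
by rewrite ler_pdivrMr // divfK ?gt_eqF // gerBl powR_ge0.
Qed.

End power_tails.

Lemma influence_tail_le (R : realType) (P : probability Cube R) (f : Cube -> bool)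
    (p q : R) n :
  uniform_product P -> measurable_fun setT f -> 0 < p -> knowable P p f ->
  0 < q -> 1 < p * q -> (0 < n)%N ->
  (\sum_(n.+1 <= k <oo) ((influence P f k) `^ q)%:E
   <= ((EmaxWp P p f) `^ q * n%:R `^ (1 - p * q) / (p * q - 1))%:E)%E.
Proof.
move=> uP mf p_gt0 kf q_gt0 pq_gt1 n_gt0.
have E0 : 0 <= EmaxWp P p f.
  by rewrite fine_ge0 // integral_ge0 // => w _; rewrite lee_fin powR_ge0.
apply: nneseries_tail_le_powR => //; first exact: powR_ge0.
move=> k nk; rewrite powR_ge0 /=.
have bound := influence_le_powRN uP mf p_gt0 kf (leq_ltn_trans (leq0n n) nk).
apply: le_trans (ge0_ler_powR (ltW q_gt0) _ _ bound) _; rewrite ?nnegrE ?influence_ge0 //.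
  by rewrite mulr_ge0 ?powR_ge0.
by rewrite powRM ?powR_ge0 // -powRrM mulNr.
Qed.

Theorem mainTheorem12 (R : realType) (P : probability Cube R)
  (f : Cube -> bool) (p : R) :
  uniform_product P ->
  measurable_fun setT f ->
  0 < p ->
  knowable P p f ->
  (forall q : R, 0 < q -> 1 < p * q ->
     forall n : nat, (1 <= n)%N ->
       (\sum_(n.+1 <= k <oo) ((influence P f k) `^ q)%:E
        <= ((EmaxWp P p f) `^ q * ((n%:R : R) `^ (1 - p * q)) / (p * q - 1))%:E)%E)
  /\ (2^-1 < p -> (Hf P f < +oo)%E).
Proof.
move=> uP mf p_gt0 kf; split=> [q q_gt0 pq_gt1 n|p_gt_half].
  exact: influence_tail_le.
have pq : 1 < p * 2 by lra.
have tail := influence_tail_le uP mf p_gt0 kf (ltr0Sn R 1) pq (ltn0Sn 0).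
rewrite /Hf (nneseries_split 0 2) ?add0n; last by move=> k _; rewrite lee_fin sqr_ge0.
apply: lte_add_pinfty; first by rewrite sumEFin ltry.
rewrite -(eq_eseriesr (fun k _ => congr1 EFin (powR_mulrn 2 (influence_ge0 P f k)))).
by apply: le_lt_trans tail _; exact: ltry.
Qed.
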